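(* Let $\Gamma$ be block-finite and $\mathbb G,\mathbb G^*$ as below. Suppose $\hat x\in\mathrm{Range}_1(\mathbb G^* )$, $x\in\mathbb G(\hat x)$, and $f\in\langle\Gamma\rangle$ is an $m$-ary function with $\arg\min f=\mathbb G(\hat x)$. Then $(a,\dots,a)\in\mathrm{dom} f$ for every $a\in\{x_1,\dots,x_m\}$.
   Context: $D$ finite, $m\ge2$, cost functions $f:D^n\to\mathbb Q\cup\{\infty\}$, $\mathrm{dom} f=\{x:f(x)<\infty\}$. Block-finite: $D$ partitioned into $\{D_v:v\in V\}$ with (a) for each $a\in D_v$ a unary $g_a:D\to D$ mapping $\mathrm{dom} f$ into itself for all $f\in\Gamma$, $g_a(b)=a$ for $b\in D_v$; (b) $\mathrm{dom} f\in\Gamma$ for $f\in\Gamma$ and equality $=_D\in\Gamma$; (c) each $n$-ary $f\in\Gamma\setminus\{=_D\}$ has $\mathrm{dom} f\subseteq D_{v_1}\times\dots\times D_{v_n}$. $\langle\Gamma\rangle$: functions $f(x_1,\dots,x_k)=\min_{x_{k+1},\dots,x_N}f_{\mathcal I}(x_1,\dots,x_N)$ for $\mathrm{VCSP}(\Gamma)$ objectives $f_{\mathcal I}$. Maps $\mathbf g=(g_1,\dots,g_m):D^m\to D^m$ act on $[D^n]^m$ coordinatewise; $f^m(x)=\frac1m\sum f(x^i)$; generalized fractional polymorphism of arity $m\to m$: finitely supported distribution $\rho$ on maps with $\sum\rho(\mathbf g)f^m(\mathbf g(x))\le f^m(x)$ for $f\in\Gamma$, $x\in[\mathrm{dom}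 f]^m$. $\Omega=\{\mathbf g:(g_{\pi(1)},\dots,g_{\pi(m)})(x)=\mathbf g(x_{\pi(1)},\dots,x_{\pi(m)})\ \forall x\in D^m,\pi\}$. $\omega$: generalized fractional polymorphism of arity $m\to m$ with support in $\Omega$ containing the support of every other such. $\mathbb G=\{\mathbf g_k\circ\dots\circ\mathbf g_1:k\ge0,\mathbf g_i\in\mathrm{supp}(\omega)\}$; $E=\{(\mathbf g,\mathbf h\circ\mathbf g):\mathbf g\in\mathbb G,\mathbf h\in\mathrm{supp}(\omega)\}$; $\mathbb G^*$ the union of strongly connected components of $(\mathbb G,E)$ without outgoing edges; $\mathrm{Range}_1(\mathbb G^* )=\{\mathbf g(y):\mathbf g\in\mathbb G^*,y\in D^m\}$; $\mathbb G(\hat x)=\{\mathbf g(\hat x):\mathbf g\in\mathbb G\}$. *)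

From HB Require Import structures.
From Stdlib Require Import List.
From mathcomp Require Import all_boot all_order all_algebra all_fingroup.
Set Implicit Arguments. Unset Strict Implicit. Unset Printing Implicit Defensive.
Import Order.TTheory GRing.Theory Num.Theory.
Local Open Scope ring_scope.

(* Extended rationals Q ∪ {∞}: [Some q] = q, [None] = ∞. *)
Definition extQ := option rat.
Definition eadd (a b : extQ) : extQ :=
  match a, b with Some x, Some y => Some (x + y) | _, _ => None end.
Definition escale (w : rat) (a : extQ) : extQ := omap (fun x => w * x) a.
Definition ele (a b : extQ) : bool :=
  match a, b with
  | _, None => true
  | None, Some _ => false
  | Some x, Some y => x <= y
  end.
Definition emin (a b : extQ) : extQ := if ele a b then a else b.
Definition esum (s : seq extQ) : extQ := foldr eadd (Some 0) s.

Section Defs.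
Variable D : finType.

Definition language := forall n : nat, (n.-tuple D -> extQ) -> Prop.

Definition dom_fun n (f : n.-tuple D -> extQ) : n.-tuple D -> extQ :=
  fun x => if f x is Some _ then Some 0 else None.

Definition eqD_seq (s : seq D) : extQ :=
  match s with [:: a; b] => if a == b then Some 0 else None | _ => None end.
Definition eqD : 2.-tuple D -> extQ := fun x => eqD_seq x.
Definition isEqD n (f : n.-tuple D -> extQ) : Prop :=
  n = 2%N /\ forall x : n.-tuple D, f x = eqD_seq x.

(* Block-finiteness w.r.t. the partition of D into the fibres of blk. *)
Definition block_finite (G : language) (V : Type) (blk : D -> V) : Prop :=
  [/\ (forall a : D, exists g : D -> D,
          (forall n f, G n f -> forall x : n.-tuple D,
              f x != None -> f (map_tuple g x) != None)
          /\ (forall b, blk b = blk a -> g b = a)),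
      (forall n f, G n f -> G n (dom_fun f)),
      G 2%N eqD
    & (forall n f, G n f -> ~ isEqD f ->
          exists vs : n.-tuple V, forall x : n.-tuple D, f x != None ->
            forall i, blk (tnth x i) = tnth vs i)].

Record constr (N : nat) := Constr {
  c_ar : nat; c_fun : c_ar.-tuple D -> extQ; c_scope : c_ar.-tuple 'I_N }.

Definition inst_obj N (I : seq (constr N)) (y : N.-tuple D) : extQ :=
  esum [seq @c_fun _ c (map_tuple (tnth y) (@c_scope _ c)) | c <- I].

Definition expressible (G : language) k (f : k.-tuple D -> extQ) : Prop :=
  exists (N : nat) (I : seq (constr (k + N))),
    (forall c, In c I -> G (c_ar c) (@c_fun _ c)) /\
    forall x : k.-tuple D,
      f x = \big[emin/None]_(z : N.-tuple D) inst_obj I (cat_tuple x z).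

Definition argmin k (f : k.-tuple D -> extQ) : {set k.-tuple D} :=
  [set x | (f x != None) && [forall y, ele (f x) (f y)]].

Variable m : nat.

Definition Map := {ffun m.-tuple D -> m.-tuple D}.
Definition idm : Map := [ffun x => x].
Definition comp (h g : Map) : Map := [ffun x => h (g x)].

(* coordinatewise action of g on [D^n]^m (applied to each column) *)
Definition apply_map n (g : Map) (x : m.-tuple (n.-tuple D))
  : m.-tuple (n.-tuple D) :=
  [tuple [tuple tnth (g [tuple tnth (tnth x k) j | k < m]) i | j < n] | i < m].

Definition fm n (f : n.-tuple D -> extQ) (x : m.-tuple (n.-tuple D)) : extQ :=
  escale (m%:R^-1) (esum (map f x)).

(* generalized fractional polymorphism of arity m -> m, given as a finite
   list of (weight, map) pairs with positive weights summing to 1 *)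
Definition gfp (G : language) (rho : seq (rat * Map)) : Prop :=
  [/\ (forall p, p \in rho -> 0 < p.1),
      \sum_(p <- rho) p.1 = 1
    & forall n f, G n f -> forall x : m.-tuple (n.-tuple D),
        (forall i, f (tnth x i) != None) ->
        ele (esum [seq escale p.1 (fm f (apply_map p.2 x)) | p <- rho]) (fm f x)].

Definition supp (rho : seq (rat * Map)) : {set Map} :=
  [set g | g \in map snd rho].

Definition perm_tuple (pi : 'S_m) (x : m.-tuple D) : m.-tuple D :=
  [tuple tnth x (pi i) | i < m].

Definition inOmega (g : Map) : Prop :=
  forall (pi : 'S_m) (x : m.-tuple D), g (perm_tuple pi x) = perm_tuple pi (g x).

Definition is_omega (G : language) (w : seq (rat * Map)) : Prop :=
  [/\ gfp G w,
      (forall g, g \in supp w -> inOmega g)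
    & forall rho, gfp G rho -> (forall g, g \in supp rho -> inOmega g) ->
        supp rho \subset supp w].

Definition Gstep (S : {set Map}) : rel Map :=
  fun a b => [exists h in S, b == comp h a].
Definition GG (S : {set Map}) : {set Map} := [set g | connect (Gstep S) idm g].
Definition Erel (S : {set Map}) : rel Map :=
  fun a b => (a \in GG S) && Gstep S a b.
Definition scc (S : {set Map}) (g : Map) : {set Map} :=
  [set h | connect (Erel S) g h && connect (Erel S) h g].
(* union of the strongly connected components without outgoing edges *)
Definition Gstar (S : {set Map}) : {set Map} :=
  [set g in GG S | [forall h, forall h',
      (h \in scc S g) && Erel S h h' ==> (h' \in scc S g)]].
Definition Range1 (S : {set Map}) : {set m.-tuple D} :=
  [set y | [exists g in Gstar S, [exists z, y == g z]]].
Definition Gorbit (S : {set Map}) (xh : m.-tuple D) : {set m.-tuple D} :=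
  (fun g : Map => g xh) @: GG S.

End Defs.

From Pilot Require Import Defs.
From HB Require Import structures.
From mathcomp Require Import all_boot all_order all_algebra all_fingroup.
From Stdlib Require Import ClassicalEpsilon.
From Stdlib Require List.
Set Implicit Arguments. Unset Strict Implicit. Unset Printing Implicit Defensive.
Import Order.TTheory GRing.Theory Num.Theory.
Local Open Scope ring_scope.

(* If [x] lies in a single block, the unary map [g_a] of block-finiteness
   sends [x] to the constant tuple [(a,...,a)]; as [g_a] preserves the domain
   of every function of Gamma, it preserves that of every expressible [f].
   Otherwise modify each map [g] of the support of [omega] so that it sends
   every tuple that meets two blocks and contains [a] to [(a,...,a)].  On the
   columns that the fractional inequality actually sees (inside one block for
   every function of Gamma other than [=_D], and pairwise equal columns for
   [=_D]) nothing changes, so the modified distribution is again a generalized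
   fractional polymorphism in [Omega]; by maximality of [omega] its support
   contains a modified map [h].  Then [h x = (a,...,a)] lies in the orbit
   [G(xh) = argmin f], hence in [dom f]. *)

Lemma eadd_finite (a b : extQ) : (eadd a b != None) = (a != None) && (b != None).
Proof. by case: a; case: b. Qed.

Lemma emin_finite (a b : extQ) : (emin a b != None) = (a != None) || (b != None).
Proof. by case: a => [a|]; case: b => [b|]; rewrite /emin //=; case: ifP. Qed.

Lemma esum_finite (s : seq extQ) : (esum s != None) = all (fun e => e != None) s.
Proof. by elim: s => //= e s IHs; rewrite eadd_finite IHs. Qed.

Lemma big_emin_finite (I : Type) (r : seq I) (F : I -> extQ) :
  (\big[emin/None]_(i <- r) F i != None) = has (fun i => F i != None) r.
Proof. by elim: r => [|i r IHr]; rewrite ?big_nil ?big_cons ?emin_finite ?IHr. Qed.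

Lemma esum_zero (s : seq extQ) : all (pred1 (Some 0)) s -> esum s = Some 0.
Proof. by elim: s => //= e s IHs /andP[/eqP-> /IHs->]; rewrite /= add0r. Qed.

Section DomainPreservingMaps.
Variables (D : finType) (G : language D) (g : D -> D).

Definition dom_preserving :=
  forall n f, @G n f -> forall x : n.-tuple D,
    f x != None -> f (map_tuple g x) != None.

Hypothesis gG : dom_preserving.

Lemma inst_obj_dom_preserving N (I : seq (constr D N)) (y : N.-tuple D) :
  (forall c, List.In c I -> @G (c_ar c) (@c_fun _ _ c)) ->
  inst_obj I y != None -> inst_obj I (map_tuple g y) != None.
Proof.
rewrite /inst_obj !esum_finite; elim: I => [|c I IHI] //= IG /andP[cy Iy].
apply/andP; split; last by apply: IHI => // c' Ic'; apply: IG; right.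
have -> : map_tuple (tnth (map_tuple g y)) (c_scope c)
        = map_tuple g (map_tuple (tnth y) (c_scope c)).
  by apply: eq_from_tnth => i; rewrite !tnth_map.
by apply: gG cy; apply: IG; left.
Qed.

Lemma expressible_dom_preserving k (f : k.-tuple D -> extQ) (x : k.-tuple D) :
  expressible G f -> f x != None -> f (map_tuple g x) != None.
Proof.
case=> N [I [IG fE]]; rewrite !fE !big_emin_finite => /hasP[z _ xz].
apply/hasP; exists (map_tuple g z); first by rewrite mem_index_enum.
have -> : cat_tuple (map_tuple g x) (map_tuple g z) = map_tuple g (cat_tuple x z).
  by apply: val_inj; rewrite /= map_cat.
exact: inst_obj_dom_preserving.
Qed.

End DomainPreservingMaps.

Section Tuples.
Variables (D : finType) (m : nat).

Lemma apply_map_idm n (X : m.-tuple (n.-tuple D)) : apply_map (Defs.idm D m) X = X.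
Proof.
apply: eq_from_tnth => i; apply: eq_from_tnth => j.
by rewrite !tnth_mktuple ffunE tnth_mktuple.
Qed.

Lemma apply_map_equal_columns n h (X : m.-tuple (n.-tuple D)) (j1 j2 : 'I_n) :
  (forall k, tnth (tnth X k) j1 = tnth (tnth X k) j2) ->
  forall k, tnth (tnth (apply_map h X) k) j1 = tnth (tnth (apply_map h X) k) j2.
Proof.
move=> Xj k; rewrite !tnth_mktuple; congr (tnth (h _) _).
by apply: eq_from_tnth => k'; rewrite !tnth_mktuple Xj.
Qed.

Lemma fm_zero n (f : n.-tuple D -> extQ) (X : m.-tuple (n.-tuple D)) :
  (forall k, f (tnth X k) = Some 0) -> fm f X = Some 0.
Proof.
move=> fX; rewrite /fm esum_zero /= ?mulr0 //.
by apply/allP => _ /mapP[_ /tnthP[k ->] ->]; rewrite fX.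
Qed.

Lemma eqD_finite (y : 2.-tuple D) :
  (eqD_seq y != None) = (tnth y ord0 == tnth y ord_max).
Proof. by case: y => [[|u [|v [|? ?]]] //] y2; rewrite /tnth /=; case: (u == v). Qed.

Lemma eqD_zero (y : 2.-tuple D) :
  tnth y ord0 = tnth y ord_max -> eqD_seq y = Some 0.
Proof.
by case: y => [[|u [|v [|? ?]]] //] y2; rewrite /tnth /= => ->; rewrite eqxx.
Qed.

Lemma eqD_fm_apply_map (f : 2.-tuple D -> extQ) h (X : m.-tuple (2.-tuple D)) :
  (forall y, f y = eqD_seq y) -> (forall k, f (tnth X k) != None) ->
  fm f (apply_map h X) = Some 0.
Proof.
move=> fE Xdom; apply: fm_zero => k; rewrite fE.
have Xeq k' : tnth (tnth X k') ord0 = tnth (tnth X k') ord_max.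
  by apply/eqP; rewrite -eqD_finite -fE.
exact: eqD_zero (apply_map_equal_columns h Xeq k).
Qed.

Lemma mem_perm_tuple (pi : 'S_m) (a : D) y : (a \in perm_tuple pi y) = (a \in y).
Proof.
apply/tnthP/tnthP => -[i ->]; first by exists (pi i); rewrite tnth_mktuple.
by exists (pi^-1 i)%g; rewrite tnth_mktuple permKV.
Qed.

End Tuples.

Section Blocks.
Variables (D : finType) (m : nat) (V : Type) (blk : D -> V).

Definition single_block (y : m.-tuple D) : Prop :=
  forall i j, blk (tnth y i) = blk (tnth y j).

Lemma single_block_perm (pi : 'S_m) y :
  single_block (perm_tuple pi y) <-> single_block y.
Proof.
split=> yS i j; last by rewrite !tnth_mktuple.
by have := yS (pi^-1 i)%g (pi^-1 j)%g; rewrite !tnth_mktuple !permKV.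
Qed.

Lemma dom_const_single_block (G : language D) (f : m.-tuple D -> extQ)
    (x : m.-tuple D) (a : D) :
  block_finite G blk -> expressible G f -> f x != None ->
  single_block x -> a \in x -> f [tuple a | _ < m] != None.
Proof.
case=> blk_retract _ _ _ fE fx xS /tnthP[i0 ->].
have [g [gG g_blk]] := blk_retract (tnth x i0).
have -> : [tuple tnth x i0 | _ < m] = map_tuple g x.
  by apply: eq_from_tnth => i; rewrite tnth_mktuple tnth_map (g_blk _ (xS i i0)).
exact: (expressible_dom_preserving (G := G) gG fE fx).
Qed.

Variable a : D.

Definition collapse (g : Map D m) : Map D m :=
  [ffun y => if excluded_middle_informative (single_block y \/ a \notin y)
             then g y else [tuple a | _ < m]].

Lemma collapse_id g y : single_block y \/ a \notin y -> collapse g y = g y.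
Proof. by move=> yS; rewrite ffunE; case: excluded_middle_informative. Qed.

Lemma collapse_diag g y :
  ~ single_block y -> a \in y -> collapse g y = [tuple a | _ < m].
Proof.
move=> yNS ay; rewrite ffunE.
by case: excluded_middle_informative => // -[|]; rewrite ?ay.
Qed.

Lemma collapse_Omega g : inOmega g -> inOmega (collapse g).
Proof.
move=> gO pi y; have [yS|yNS] := classic (single_block y \/ a \notin y).
  rewrite !collapse_id ?single_block_perm ?mem_perm_tuple //; exact: gO.
have [yNS1 ay] : ~ single_block y /\ a \in y.
  by split=> [yS|]; [apply: yNS; left | apply/negPn/negP => ?; apply: yNS; right].
rewrite !collapse_diag ?single_block_perm ?mem_perm_tuple //.
by apply: eq_from_tnth => i; rewrite !tnth_mktuple.
Qed.

Lemma apply_map_collapse n g (X : m.-tuple (n.-tuple D)) (vs : n.-tuple V) :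
  (forall k j, blk (tnth (tnth X k) j) = tnth vs j) ->
  apply_map (collapse g) X = apply_map g X.
Proof.
move=> Xvs; apply: eq_from_tnth => i; rewrite !tnth_mktuple.
apply: eq_from_tnth => j; rewrite !tnth_mktuple collapse_id //; left => k1 k2.
by rewrite !tnth_mktuple !Xvs.
Qed.


Definition collapse_fpol (rho : seq (rat * Map D m)) : seq (rat * Map D m) :=
  [seq (p.1, collapse p.2) | p <- rho].

Lemma gfp_collapse (G : language D) (rho : seq (rat * Map D m)) :
  block_finite G blk -> gfp G rho -> gfp G (collapse_fpol rho).
Proof.
case=> _ _ _ blk_dom [rho_pos rho_sum rho_ineq]; rewrite /collapse_fpol; split.
- by move=> _ /mapP[p rho_p ->]; exact: rho_pos rho_p.
- by rewrite big_map.
move=> n f Gf X Xdom; have [[n2 fE]|fNeq] := classic (isEqD f).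
  subst n; have fX : fm f X = Some 0.
    by rewrite -[X in fm f X]apply_map_idm; exact: eqD_fm_apply_map.
  rewrite fX esum_zero //; apply/allP => _ /mapP[p _ ->].
  by rewrite eqD_fm_apply_map //= mulr0.
have [vs Xvs] := blk_dom n f Gf fNeq.
have Xblk k j : blk (tnth (tnth X k) j) = tnth vs j by exact: Xvs.
rewrite -map_comp (eq_map (g := fun p => escale p.1 (fm f (apply_map p.2 X)))).
  exact: rho_ineq.
by move=> p /=; rewrite (apply_map_collapse _ Xblk).
Qed.

End Blocks.

Lemma gfp_supp_nonempty (D : finType) (m : nat) (G : language D)
    (rho : seq (rat * Map D m)) :
  gfp G rho -> exists g, g \in supp rho.
Proof.
case: rho => [|p rho] [_]; first by rewrite big_nil.
by exists p.2; rewrite inE mem_head.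
Qed.

Lemma collapse_in_supp (D : finType) (m : nat) (V : Type) (blk : D -> V) (a : D)
    (G : language D) (w : seq (rat * Map D m)) (g : Map D m) :
  block_finite G blk -> is_omega G w -> g \in supp w -> collapse blk a g \in supp w.
Proof.
move=> bf [wgfp wOmega wmax]; rewrite [g \in _]inE => /mapP[p pw ->].
have collapse_w_Omega h : h \in supp (collapse_fpol blk a w) -> inOmega h.
  rewrite inE /collapse_fpol -map_comp => /mapP[q qw ->].
  by apply: collapse_Omega; apply: wOmega; rewrite inE map_f.
apply: (subsetP (wmax _ (gfp_collapse a bf wgfp) collapse_w_Omega)).
by rewrite inE /collapse_fpol -map_comp; exact: (map_f (snd \o _)).
Qed.

Lemma Gorbit_step (D : finType) (m : nat) (S : {set Map D m})
    (xh y : m.-tuple D) (h : Map D m) :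
  y \in Gorbit S xh -> h \in S -> h y \in Gorbit S xh.
Proof.
case/imsetP=> k kG -> hS; apply/imsetP; exists (Defs.comp h k); last by rewrite ffunE.
move: kG; rewrite !inE => kG; apply: connect_trans kG (connect1 _).
by rewrite /Gstep; apply/existsP; exists h; rewrite hS eqxx.
Qed.

Theorem lemma7p4 (D : finType) (m : nat) (G : language D) (V : Type)
    (blk : D -> V) (w : seq (rat * Map D m)) (xh x : m.-tuple D)
    (f : m.-tuple D -> extQ) :
  (1 < m)%N ->
  block_finite G blk ->
  is_omega G w ->
  xh \in Range1 (supp w) ->
  x \in Gorbit (supp w) xh ->
  expressible G f ->
  argmin f = Gorbit (supp w) xh ->
  forall a : D, a \in x -> f [tuple a | _ < m] != None.
Proof.
move=> _ bf w_omega _ x_orbit fE f_argmin a ax.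
have fx : f x != None by move: x_orbit; rewrite -f_argmin inE => /andP[].
have [xS|xNS] := classic (single_block blk x).
  exact: dom_const_single_block bf fE fx xS ax.
have [w_gfp _ _] := w_omega; have [g gw] := gfp_supp_nonempty w_gfp.
have := Gorbit_step x_orbit (collapse_in_supp a bf w_omega gw).
by rewrite (collapse_diag (a := a) _ xNS ax) -f_argmin inE => /andP[].
Qed.
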